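(* Let $L$ be an almost abelian Lie algebra of dimension $n$ over a field $F$. Then there exists a Lie algebra $H$ over $F$ with $H^2\cong L$ if and only if the characteristic of $F$ divides $n-1$ (where, for characteristic $0$, this means $n-1=0$).
   Context: A Lie algebra $L$ is almost abelian if $L=Fx\dotplus A$ (vector space direct sum) where $A$ is an abelian ideal of $L$ and $\mathrm{ad}\,x$ acts as the identity map on $A$, i.e. $[x,a]=a$ for all $a\in A$. $H^2=[H,H]$ denotes the derived algebra. *)

From HB Require Import structures.
From mathcomp Require Import all_boot all_order all_algebra.
Set Implicit Arguments. Unset Strict Implicit. Unset Printing Implicit Defensive.
Import GRing.Theory.
Local Open Scope ring_scope.

Definition lie_algebra (F : fieldType) (V : vectType F) (br : V -> V -> V) :=
  [/\ (forall (a : F) (x y z : V), br (a *: x + y) z = a *: br x z + br y z),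
      (forall (a : F) (x y z : V), br z (a *: x + y) = a *: br z x + br z y),
      (forall x : V, br x x = 0) &
      (forall x y z : V, br x (br y z) + br y (br z x) + br z (br x y) = 0)].

Definition in_derived (F : fieldType) (V : vectType F) (br : V -> V -> V) (v : V) :=
  exists s : seq (F * V * V), v = \sum_(t <- s) t.1.1 *: br t.1.2 t.2.

Definition almost_abelian (F : fieldType) (L : vectType F) (br : L -> L -> L) :=
  exists (x : L) (A : {vspace L}),
    [/\ x \notin A, (<[x]> + A)%VS = fullv,
        (forall a b, a \in A -> b \in A -> br a b = 0),
        (forall y a, a \in A -> br y a \in A) &
        (forall a, a \in A -> br x a = a)].

Definition derived_iso (F : fieldType) (H L : vectType F)
    (brH : H -> H -> H) (brL : L -> L -> L) :=
  exists f : L -> H,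
    [/\ (forall (a : F) (x y : L), f (a *: x + y) = a *: f x + f y),
        injective f,
        (forall v : H, in_derived brH v <-> exists x, v = f x) &
        (forall x y : L, f (brL x y) = brH (f x) (f y))].

Definition char_divides (F : fieldType) (m : nat) :=
  (exists2 p, p \in [pchar F] & (p %| m)%N) \/
  ((forall p, p \notin [pchar F]) /\ m = 0%N).

From HB Require Import structures.
From mathcomp Require Import all_boot all_order all_algebra ring.
From Stdlib Require Import Classical.
Set Implicit Arguments. Unset Strict Implicit. Unset Printing Implicit Defensive.
Import GRing.Theory.
Local Open Scope ring_scope.

(* Write L = F x + A with ad x the identity on the abelian ideal A, so that
   tr (ad x) = dim A = n - 1.
   If L is isomorphic to H^2, then L is an ideal of H and x is a combination of
   brackets [h, k]; so ad x is a combination of commutators of the restrictions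
   of ad h and ad k to L, and has trace 0: hence n - 1 = 0 in F.
   Conversely, if n - 1 = 0 in F, then A ~ F[t]/(t^(n-1)) carries the
   multiplication by t and d/dt, whose commutator is the identity; extended by 0
   at x they are derivations D, T of L with [D, T] = ad x. Adjoining to L two
   elements acting by D and T, with bracket x, gives a Lie algebra H with H^2 = L. *)

Lemma char_dividesP (F : fieldType) (m : nat) : char_divides F m <-> m%:R = 0 :> F.
Proof.
split=> [[[p pF p_dvd_m] | [_ ->]] // | m0]; first by apply/eqP; rewrite -(dvdn_pcharf pF).
case: (posnP m) => [->|m_gt0].
  have [[p pF]|no_char] := classic (exists p, p \in [pchar F]); first by left; exists p.
  by right; split=> // p; apply/negP=> pF; apply: no_char; exists p.
have [p pF] := natf0_pchar m_gt0 (introT eqP m0).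
by left; exists p; rewrite ?(dvdn_pcharf pF) ?m0.
Qed.

Lemma addr3ACA (V : zmodType) (a1 b1 c1 a2 b2 c2 a3 b3 c3 : V) :
  (a1 + b1 + c1) + (a2 + b2 + c2) + (a3 + b3 + c3) =
  (a1 + a2 + a3) + (b1 + b2 + b3) + (c1 + c2 + c3).
Proof. by rewrite (@GRing.add V).[AC ((3*3)*3) ((1*4*7)*(2*5*8)*(3*6*9))]. Qed.

Lemma addr4ACA (V : zmodType) (a1 a2 b1 b2 c1 c2 d1 d2 : V) :
  (a1 + a2) + (b1 + b2) - (c1 + c2) + (d1 + d2) = (a1 + b1 - c1 + d1) + (a2 + b2 - c2 + d2).
Proof. by rewrite opprD (@GRing.add V).[AC (((2*2)*2)*2) ((1*3*5*7)*(2*4*6*8))]. Qed.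

Lemma addr_cancel_cycle (V : zmodType) (a b c d e f : V) :
  (a - b - c + d) + (e - d - a + f) + (c - f - e + b) = 0.
Proof.
rewrite (@GRing.add V).[AC ((4*4)*4) ((1*7)*(2*12)*(3*9)*(4*6)*(5*11)*(8*10))].
by rewrite ?subrr ?addrN ?addNr ?addr0.
Qed.

Lemma addr_cancel_cycle_sub (V : zmodType) (a a' b b' c c' z1 z2 z3 : V) :
  a - a' = z3 -> b - b' = z1 -> c - c' = z2 ->
  (a - c' - z1) + (b - a' - z2) + (c - b' - z3) = 0.
Proof.
move=> ha hb hc.
rewrite -[a](subrK a') ha -[b](subrK b') hb -[c](subrK c') hc.
rewrite (@GRing.add V).[AC ((4*4)*4) ((1*12)*(2*7)*(3*10)*(4*5)*(6*11)*(8*9))].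
by rewrite ?subrr ?addrN ?addNr ?addr0.
Qed.

Lemma commutator_lin_comb (F : fieldType) (V : lmodType F) (p1 p2 q1 q2 : F)
    (dd dt td tt : V) :
  p1 *: (q1 *: dd + q2 *: dt) + p2 *: (q1 *: td + q2 *: tt) -
  (q1 *: (p1 *: dd + p2 *: dt) + q2 *: (p1 *: td + p2 *: tt)) =
  (p1 * q2 - p2 * q1) *: (dt - td).
Proof.
rewrite scalerBr !scalerBl !scalerDr !scalerA.
rewrite [q1 * p1]mulrC [q1 * p2]mulrC [q2 * p1]mulrC [q2 * p2]mulrC !opprD.
rewrite [LHS](@GRing.add V).[AC ((2*2)*(2*2)) (((1*5)*(4*8))*((2*6)*(7*3)))].
by rewrite !subrr !add0r opprK.
Qed.

Section LieAlgebra.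
Variables (F : fieldType) (V : vectType F) (br : V -> V -> V).
Hypothesis br_lie : lie_algebra br.

Lemma lie_linearr z : linear (br z).
Proof. by case: br_lie => _ brr _ _ a u v; apply: brr. Qed.

HB.instance Definition _ z := GRing.isLinear.Build F V V *:%R (br z) (lie_linearr z).

Lemma lie_alt u : br u u = 0. Proof. by case: br_lie. Qed.

Lemma lie_jacobi u v w : br u (br v w) + br v (br w u) + br w (br u v) = 0.
Proof. by case: br_lie. Qed.

Lemma lie_linearl z : linear (br^~ z).
Proof. by case: br_lie => brl _ _ _ a u v; apply: brl. Qed.

Lemma lie_anti u v : br u v = - br v u.
Proof.
have brDl w : br (u + v) w = br u w + br v w.
  by have := lie_linearl w 1 u v; rewrite !scale1r.
apply/eqP; rewrite -addr_eq0.
by have := lie_alt (u + v); rewrite brDl !linearD /= !lie_alt add0r addr0 addrC => ->.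
Qed.

Lemma lie_bracketDl u v z : br (u + v) z = br u z + br v z.
Proof. by rewrite lie_anti linearD /= opprD -!lie_anti. Qed.

Lemma lie_bracketZl a u z : br (a *: u) z = a *: br u z.
Proof. by rewrite lie_anti linearZ /= -scalerN -lie_anti. Qed.

Lemma lie_ad_bracket h k w : br (br h k) w = br h (br k w) - br k (br h w).
Proof.
have := lie_jacobi h k w; rewrite (lie_anti w (br h k)) (lie_anti w h) linearN /=.
by move/eqP; rewrite subr_eq0 eq_sym => /eqP.
Qed.

Lemma lie_suml (I : Type) (s : seq I) (c : I -> F) (w : I -> V) z :
  br (\sum_(t <- s) c t *: w t) z = \sum_(t <- s) c t *: br (w t) z.
Proof.
rewrite lie_anti linear_sum -sumrN; apply: eq_bigr => t _.
by rewrite linearZ lie_anti scalerN.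
Qed.

End LieAlgebra.

Definition derivation (F : fieldType) (V : vectType F) (br : V -> V -> V) (D : V -> V) :=
  forall u v, D (br u v) = br (D u) v + br u (D v).

Section Basis.
Variables (F : fieldType) (V : vectType F) (k : nat) (e : k.-tuple V).
Hypothesis e_basis : basis_of fullv e.

Definition trace (g : V -> V) := \sum_(i < k) coord e i (g e`_i).

Lemma coord_expand v : v = \sum_(i < k) coord e i v *: e`_i.
Proof. exact: coord_basis e_basis (memvf v). Qed.

Lemma coord_basis_elt (i j : 'I_k) : coord e j e`_i = (i == j)%:R.
Proof. exact: coord_free (basis_free e_basis). Qed.

Lemma eq_trace (g h : V -> V) : g =1 h -> trace g = trace h.
Proof. by move=> eq_gh; apply: eq_bigr => i _; rewrite eq_gh. Qed.

Lemma trace_sum (I : Type) (s : seq I) (c : I -> F) (g : I -> V -> V) :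
  trace (fun v => \sum_(t <- s) c t *: g t v) = \sum_(t <- s) c t * trace (g t).
Proof.
rewrite /trace; under eq_bigr do rewrite linear_sum.
rewrite exchange_big; apply: eq_bigr => t _; rewrite mulr_sumr.
by apply: eq_bigr => i _; rewrite linearZ.
Qed.

Section TraceCommutator.
Variables (g h : V -> V).
Hypotheses (g_linear : linear g) (h_linear : linear h).
HB.instance Definition _ := GRing.isLinear.Build F V V *:%R g g_linear.
HB.instance Definition _ := GRing.isLinear.Build F V V *:%R h h_linear.

Lemma trace_comm : trace (g \o h) = trace (h \o g).
Proof.
rewrite /trace.
transitivity (\sum_(i < k) \sum_(j < k) coord e j (h e`_i) * coord e i (g e`_j)).
  apply: eq_bigr => i _; rewrite /= {1}(coord_expand (h e`_i)) !linear_sum.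
  by apply: eq_bigr => j _; rewrite !linearZ.
rewrite exchange_big; apply: eq_bigr => j _.
rewrite /= {2}(coord_expand (g e`_j)) !linear_sum.
by apply: eq_bigr => i _; rewrite !linearZ /= mulrC.
Qed.

Lemma trace_commutator : trace (fun v => g (h v) - h (g v)) = 0.
Proof.
rewrite /trace; under eq_bigr do rewrite linearB.
by rewrite sumrB; apply/eqP; rewrite subr_eq0; apply/eqP; exact: trace_comm.
Qed.

End TraceCommutator.

Definition extend_basis (W : lmodType F) (g : nat -> W) (v : V) : W :=
  \sum_(i < k) coord e i v *: g i.

Lemma extend_basis_linear (W : lmodType F) (g : nat -> W) : linear (extend_basis g).
Proof.
move=> a u v; rewrite /extend_basis scaler_sumr -big_split; apply: eq_bigr => i _.
by rewrite linearP /= scalerDl scalerA.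
Qed.

Lemma extend_basisE (W : lmodType F) (g : nat -> W) j : (j < k)%N ->
  extend_basis g e`_j = g j.
Proof.
move=> lt_jk; rewrite /extend_basis (bigD1 (Ordinal lt_jk)) //= big1 ?addr0 => [|i ne_ij].
  by rewrite (coord_basis_elt (Ordinal lt_jk)) eqxx scale1r.
by rewrite (coord_basis_elt (Ordinal lt_jk)) eq_sym (negbTE ne_ij) scale0r.
Qed.

Section LinearCoordExpand.
Variables (W : lmodType F) (f : V -> W).
Hypothesis f_linear : linear f.
HB.instance Definition _ := GRing.isLinear.Build F V W *:%R f f_linear.

Lemma linear_coord_expand v : f v = \sum_(i < k) coord e i v *: f e`_i.
Proof.
rewrite {1}(coord_expand v) linear_sum.
by apply: eq_bigr => i _; rewrite linearZ.
Qed.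

End LinearCoordExpand.

Lemma linear_basis_ext (W : lmodType F) (f g : V -> W) : linear f -> linear g ->
  (forall i : 'I_k, f e`_i = g e`_i) -> f =1 g.
Proof.
move=> f_lin g_lin eq_fg v; rewrite (linear_coord_expand f_lin) (linear_coord_expand g_lin).
by apply: eq_bigr => i _; rewrite eq_fg.
Qed.

End Basis.

HB.instance Definition _ (F : fieldType) (V : vectType F) (k : nat) (e : k.-tuple V)
    (W : lmodType F) (g : nat -> W) :=
  GRing.isLinear.Build F V W *:%R (extend_basis e g) (extend_basis_linear e g).

Lemma extend_basisZ (F : fieldType) (V : vectType F) (k : nat) (e : k.-tuple V)
    (W : lmodType F) (g : nat -> W) a v :
  extend_basis e g (a *: v) = a *: extend_basis e g v.
Proof. exact: linearZ. Qed.

Section DerivedAlgebraTrace.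
Variables (F : fieldType) (H L : vectType F) (brH : H -> H -> H) (brL : L -> L -> L).
Hypothesis brH_lie : lie_algebra brH.
Variable f : L -> H.
Hypotheses (f_linear : linear f) (f_inj : injective f)
  (f_derived : forall v, in_derived brH v <-> exists y, v = f y)
  (f_bracket : forall y z, f (brL y z) = brH (f y) (f z)).
HB.instance Definition _ z := GRing.isLinear.Build F H H *:%R (brH z) (lie_linearr brH_lie z).
HB.instance Definition _ := GRing.isLinear.Build F L H *:%R f f_linear.

Lemma bracket_in_image h l : exists y, brH h (f l) == f y.
Proof.
have [y ->] : exists y, brH h (f l) = f y.
  by apply/f_derived; exists [:: (1, h, f l)]; rewrite big_seq1 scale1r.
by exists y.
Qed.

(* [ad_res h] is [ad h] restricted to the ideal H^2 = f(L), read back in L. *)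
Definition ad_res h l := xchoose (bracket_in_image h l).

Lemma ad_resE h l : f (ad_res h l) = brH h (f l).
Proof. by apply/eqP; rewrite eq_sym; exact: (xchooseP (bracket_in_image h l)). Qed.

Lemma ad_res_linear h : linear (ad_res h).
Proof. by move=> a u v; apply: f_inj; rewrite linearP /= !ad_resE !linearP. Qed.

Lemma ad_res_bracket h k l :
  ad_res (brH h k) l = ad_res h (ad_res k l) - ad_res k (ad_res h l).
Proof. by apply: f_inj; rewrite linearB /= !ad_resE lie_ad_bracket. Qed.

Lemma trace_ad_derived k (e : k.-tuple L) : basis_of fullv e ->
  forall y, trace e (brL y) = 0.
Proof.
move=> e_basis y; have [s fy] := (f_derived (f y)).2 (ex_intro _ y erefl).
pose comm h1 h2 l := ad_res h1 (ad_res h2 l) - ad_res h2 (ad_res h1 l).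
have ad_y_sum : brL y =1 fun l => \sum_(t <- s) t.1.1 *: comm t.1.2 t.2 l.
  move=> l; apply: f_inj; rewrite f_bracket fy lie_suml // linear_sum.
  by apply: eq_bigr => t _; rewrite linearZ /= /comm -ad_res_bracket ad_resE.
rewrite (eq_trace _ ad_y_sum) trace_sum big1 // => t _.
by rewrite trace_commutator ?mulr0 //; exact: ad_res_linear.
Qed.

End DerivedAlgebraTrace.

Definition det2 (F : fieldType) (p q : F^o * F^o) : F := p.1 * q.2 - p.2 * q.1.

Lemma det2_anti (F : fieldType) (p q : F^o * F^o) : det2 q p = - det2 p q.
Proof. by rewrite /det2 opprB [q.1 * _]mulrC [q.2 * _]mulrC. Qed.

Lemma det2_linearr (F : fieldType) (a : F) (p q r : F^o * F^o) :
  det2 r (a *: p + q) = a * det2 r p + det2 r q.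
Proof.
rewrite /det2 /= -[a *: p.1]/(a * (p.1 : F)) -[a *: p.2]/(a * (p.2 : F)).
move: (p.1 : F) (p.2 : F) (q.1 : F) (q.2 : F) (r.1 : F) (r.2 : F) => *; ring.
Qed.

Section DoubleExtension.
Variables (F : fieldType) (L : vectType F) (brL : L -> L -> L).
Hypothesis brL_lie : lie_algebra brL.
HB.instance Definition _ z := GRing.isLinear.Build F L L *:%R (brL z) (lie_linearr brL_lie z).
Variables (x : L) (D T : L -> L).
Hypotheses (D_linear : linear D) (T_linear : linear T)
  (D_derivation : derivation brL D) (T_derivation : derivation brL T)
  (D_x : D x = 0) (T_x : T x = 0) (DT_comm : forall l, D (T l) - T (D l) = brL x l).
HB.instance Definition _ := GRing.isLinear.Build F L L *:%R D D_linear.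
HB.instance Definition _ := GRing.isLinear.Build F L L *:%R T T_linear.

(* (l, (a, b)) stands for l + a d + b t, where d and t act on L by D and T and
   [d, t] = x. *)
Definition dext := (L * (F^o * F^o))%type.

(* Locked, so that the linearity rewrites of other maps do not unfold it. *)
Fact act_key : unit. Proof. by []. Qed.
Definition act (p : F^o * F^o) l : L := locked_with act_key ((p.1 : F) *: D l + (p.2 : F) *: T l).

Definition dext_br (X Y : dext) : dext :=
  (brL X.1 Y.1 + act X.2 Y.1 - act Y.2 X.1 + det2 X.2 Y.2 *: x, 0).

Lemma act_linear p : linear (act p).
Proof.
move=> a u v; rewrite /act !unlock (linearP D) (linearP T) !scalerDr !scalerA.
by rewrite [_ * a]mulrC [(p.2 : F) * a]mulrC addrACA.
Qed.
HB.instance Definition _ p := GRing.isLinear.Build F L L *:%R (act p) (act_linear p).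

Lemma act_linearl a p q l : act (a *: p + q) l = a *: act p l + act q l.
Proof. by rewrite /act !unlock /= !scalerDl -!scalerA scalerDr addrACA. Qed.

Lemma act0 l : act 0 l = 0.
Proof. by rewrite /act !unlock !scale0r addr0. Qed.

Lemma act_x p : act p x = 0.
Proof. by rewrite /act !unlock D_x T_x !scaler0 addr0. Qed.

Lemma act_derivation p : derivation brL (act p).
Proof.
move=> u v; rewrite /act !unlock D_derivation T_derivation !scalerDr.
rewrite !(lie_bracketDl brL_lie) !(lie_bracketZl brL_lie) !linearD !linearZ /=.
by rewrite addrACA.
Qed.

Lemma act_comm p q l : act p (act q l) - act q (act p l) = det2 p q *: brL x l.
Proof.
rewrite -DT_comm /act !unlock !(linearD D) !(linearD T) !(linearZ_LR D) !(linearZ_LR T).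
exact: commutator_lin_comb.
Qed.

Lemma dext_eq (X Y : dext) : X.1 = Y.1 -> X.2 = Y.2 -> X = Y.
Proof. by case: X Y => [? ?] [? ?] /= -> ->. Qed.

Lemma dext_br_linearr a (X Y Z : dext) :
  dext_br Z (a *: X + Y) = a *: dext_br Z X + dext_br Z Y.
Proof.
apply: dext_eq; last by rewrite /= scaler0 addr0.
rewrite /dext_br /= linearP act_linearl linearP det2_linearr /= scalerDl -scalerA.
by rewrite addr4ACA -scalerN -!scalerDr.
Qed.

Lemma dext_br_anti (X Y : dext) : dext_br X Y = - dext_br Y X.
Proof.
apply: dext_eq; rewrite /= ?oppr0 //.
by rewrite (lie_anti brL_lie X.1) det2_anti scaleNr !opprD !opprK [_ + act X.2 Y.1 + _]addrAC.
Qed.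

Lemma dext_br_alt (X : dext) : dext_br X X = 0.
Proof.
apply: dext_eq => //=.
by rewrite lie_alt // add0r subrr add0r /det2 mulrC subrr scale0r.
Qed.

Lemma dext_br_nested (X Y Z : dext) : (dext_br X (dext_br Y Z)).1 =
  brL X.1 (brL Y.1 Z.1) +
  (brL X.1 (act Y.2 Z.1) - brL X.1 (act Z.2 Y.1) - brL Z.1 (act X.2 Y.1) + brL Y.1 (act X.2 Z.1)) +
  (act X.2 (act Y.2 Z.1) - act X.2 (act Z.2 Y.1) - det2 Y.2 Z.2 *: brL x X.1).
Proof.
rewrite {1}/dext_br /= act0 /det2 /= !mulr0 subrr scale0r subr0 addr0 -/(det2 _ _).
rewrite !(linearD (brL X.1)) !(linearD (act X.2)) !(linearN (brL X.1)) !(linearN (act X.2)).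
rewrite !(linearZ_LR (brL X.1)) !(linearZ_LR (act X.2)) /= act_x scaler0 addr0 act_derivation.
rewrite (lie_anti brL_lie X.1 x) (lie_anti brL_lie (act X.2 Y.1) Z.1) scalerN.
by rewrite [LHS](@GRing.add L).[AC (4*4) ((1*(2*3*5*6))*(7*8*4))].
Qed.

Lemma dext_br_jacobi (X Y Z : dext) :
  dext_br X (dext_br Y Z) + dext_br Y (dext_br Z X) + dext_br Z (dext_br X Y) = 0.
Proof.
apply: dext_eq; last by rewrite /= !addr0.
have fst_add (U V : dext) : (U + V).1 = U.1 + V.1 by [].
rewrite !fst_add !dext_br_nested addr3ACA lie_jacobi // addr_cancel_cycle !add0r.
exact: addr_cancel_cycle_sub (act_comm _ _ _) (act_comm _ _ _) (act_comm _ _ _).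
Qed.

Lemma dext_lie : lie_algebra dext_br.
Proof.
split=> [a X Y Z | | |]; [| exact: dext_br_linearr | exact: dext_br_alt | exact: dext_br_jacobi].
by rewrite !(dext_br_anti _ Z) dext_br_linearr scalerN opprD.
Qed.

Definition dext_inl (l : L) : dext := (l, 0).

Lemma dext_inl_linear : linear dext_inl.
Proof. by move=> a u v; apply: dext_eq; rewrite /= ?scaler0 ?addr0. Qed.

Lemma dext_inl_inj : injective dext_inl.
Proof. by move=> u v []. Qed.

Lemma dext_br_inl u v : dext_br (dext_inl u) (dext_inl v) = dext_inl (brL u v).
Proof. by apply: dext_eq; rewrite //= !act0 /det2 /= mulr0 subrr scale0r subr0 !addr0. Qed.

Lemma dext_br_generators :
  dext_br (0, ((1 : F^o), (0 : F^o))) (0, ((0 : F^o), (1 : F^o))) = dext_inl x.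
Proof.
apply: dext_eq => //=.
by rewrite lie_alt // !raddf0 !add0r /det2 /= mulr1 mulr0 subr0 scale1r.
Qed.

Lemma in_derived_dext (X : dext) : in_derived dext_br X -> X = dext_inl X.1.
Proof.
move=> [s ->]; apply: dext_eq => //=.
by elim: s => [|t s IHs]; rewrite ?big_nil // big_cons /= IHs scaler0 addr0.
Qed.

End DoubleExtension.

Section AlmostAbelian.
Variables (F : fieldType) (L : vectType F) (brL : L -> L -> L).
Hypothesis brL_lie : lie_algebra brL.
HB.instance Definition _ z := GRing.isLinear.Build F L L *:%R (brL z) (lie_linearr brL_lie z).
Variables (x : L) (A : {vspace L}).
Hypotheses (x_notin_A : x \notin A) (x_A_full : (<[x]> + A)%VS = fullv)
  (A_abelian : forall a b, a \in A -> b \in A -> brL a b = 0)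
  (ad_x_A : forall a, a \in A -> brL x a = a).

Let m := \dim A.

Definition aa_basis : m.+1.-tuple L := cons_tuple x (vbasis A).

Lemma aa_basisP : basis_of fullv aa_basis.
Proof.
have x_neq0 : x != 0 by apply: contraNneq x_notin_A => ->; rewrite mem0v.
rewrite -x_A_full; apply: (@cat_basis _ _ _ _ [:: x] (vbasis A)); last 2 first.
- exact: seq1_basis.
- exact: vbasisP.
apply/directv_addP/eqP; rewrite -subv0; apply/subvP => y /memv_capP [/vlineP [c ->] cxA].
rewrite memv0; have [->|c_neq0] := eqVneq c 0; first by rewrite scale0r.
by move: x_notin_A; rewrite -[x](scalerK c_neq0) memvZ.
Qed.

Lemma dim_almost_abelian : \dim (fullv : {vspace L}) = m.+1.
Proof. exact: size_basis aa_basisP. Qed.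

Lemma aa_basis_A i : (0 < i)%N -> aa_basis`_i \in A.
Proof.
case: i => // i _ /=; have [lt_im|ge_im] := ltnP i m.
  by apply: vbasis_mem; apply: mem_nth; rewrite size_tuple.
by rewrite nth_default ?size_tuple ?mem0v.
Qed.

Lemma trace_ad_x : trace aa_basis (brL x) = m%:R.
Proof.
rewrite /trace big_ord_recl lie_alt // linear0 add0r.
under eq_bigr => i _ do rewrite ad_x_A ?aa_basis_A // (coord_basis_elt aa_basisP) eqxx.
by rewrite sumr_const card_ord.
Qed.

Lemma almost_abelian_decomp l : exists c a, a \in A /\ l = c *: x + a.
Proof.
have /memv_addP[y /vlineP[c ->] [a a_in_A ->]] : l \in (<[x]> + A)%VS.
  by rewrite x_A_full memvf.
by exists c, a.
Qed.

Lemma bracket_decomp c c' a a' : a \in A -> a' \in A ->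
  brL (c *: x + a) (c' *: x + a') = c *: a' - c' *: a.
Proof.
move=> aA a'A; rewrite !(lie_bracketDl brL_lie) !(lie_bracketZl brL_lie) !linearP /=.
rewrite lie_alt // !scaler0 add0r ad_x_A // (A_abelian aA a'A) addr0.
by rewrite (lie_anti brL_lie a) ad_x_A // scalerN.
Qed.

Section DerivationIntoA.
Variable D : L -> L.
Hypotheses (D_linear : linear D) (D_x : D x = 0) (D_A : forall l, D l \in A).
HB.instance Definition _ := GRing.isLinear.Build F L L *:%R D D_linear.

Lemma derivation_into_A : derivation brL D.
Proof.
move=> u v; have [c [a [aA ->]]] := almost_abelian_decomp u.
have [c' [a' [a'A ->]]] := almost_abelian_decomp v.
have D_decomp y b : D (y *: x + b) = 0 *: x + D b by rewrite linearP /= D_x scaler0 scale0r.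
rewrite bracket_decomp // linearB !linearZ /= !D_decomp !bracket_decomp ?D_A //.
by rewrite scalerN !scale0r sub0r subr0 addrC.
Qed.

End DerivationIntoA.

(* With aa_basis`_i <-> t^(i-1), aa_shift is the multiplication by t on A ~ F[t]/(t^m)
   and aa_diff is d/dt; their commutator is the identity except on
   aa_basis`_m, where it is 1 - m. *)
Definition shift_val k : L := if (0 < k < m)%N then aa_basis`_k.+1 else 0.
Definition diff_val k : L := if (1 < k <= m)%N then k.-1%:R *: aa_basis`_k.-1 else 0.
Definition aa_shift := extend_basis aa_basis shift_val.
Definition aa_diff := extend_basis aa_basis diff_val.

Lemma extend_basis_A (g : nat -> L) : (forall k, g k \in A) ->
  forall l, extend_basis aa_basis g l \in A.
Proof. by move=> gA l; apply: memv_suml => i _; apply: memvZ. Qed.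

Lemma shift_val_A k : shift_val k \in A.
Proof. by rewrite /shift_val; case: ifP => _; [exact: aa_basis_A | exact: mem0v]. Qed.

Lemma diff_val_A k : diff_val k \in A.
Proof.
rewrite /diff_val; case: ifP => [/andP[lt1k _] | _]; last exact: mem0v.
by apply/memvZ/aa_basis_A; case: k lt1k => [|[|k]].
Qed.

Lemma extend_basis_x (g : nat -> L) : g 0%N = 0 -> extend_basis aa_basis g x = 0.
Proof. by move=> g0; rewrite -[x]/(aa_basis`_0) (extend_basisE aa_basisP). Qed.

Lemma aa_shift_derivation : derivation brL aa_shift.
Proof.
apply: derivation_into_A; [exact: extend_basis_linear | exact: extend_basis_x |].
exact: extend_basis_A shift_val_A.
Qed.

Lemma aa_diff_derivation : derivation brL aa_diff.
Proof.
apply: derivation_into_A; [exact: extend_basis_linear | exact: extend_basis_x |].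
exact: extend_basis_A diff_val_A.
Qed.

Lemma diff_shift_basis i : (0 < i <= m)%N ->
  aa_diff (aa_shift aa_basis`_i) = (if (i < m)%N then i%:R else 0) *: aa_basis`_i.
Proof.
case/andP=> i_gt0 le_im; rewrite /aa_shift (extend_basisE aa_basisP) ?ltnS // /shift_val i_gt0.
have [lt_im | _] := ltnP i m; last by rewrite /aa_diff linear0 scale0r.
by rewrite /aa_diff (extend_basisE aa_basisP) ?ltnS // /diff_val ltnS i_gt0 lt_im.
Qed.

Lemma shift_diff_basis i : (0 < i <= m)%N ->
  aa_shift (aa_diff aa_basis`_i) = i.-1%:R *: aa_basis`_i.
Proof.
case/andP=> i_gt0 le_im; rewrite /aa_diff (extend_basisE aa_basisP) ?ltnS // /diff_val le_im andbT.
case: i i_gt0 le_im => [|[|j]] // _ le_jm; first by rewrite /aa_shift linear0 scale0r.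
rewrite -[(1 < j.+2)%N]/true /aa_shift extend_basisZ (extend_basisE aa_basisP) 1?ltnW //.
by rewrite /shift_val le_jm.
Qed.

Section CharDividesDim.
Hypothesis m_eq0 : m%:R = 0 :> F.

Lemma diff_shift_comm_basis (i : 'I_m.+1) :
  aa_diff (aa_shift aa_basis`_i) - aa_shift (aa_diff aa_basis`_i) = brL x aa_basis`_i.
Proof.
case: i => [[|i] lt_im].
  by rewrite /aa_diff /aa_shift lie_alt // !extend_basis_x // !raddf0 addr0.
rewrite diff_shift_basis // shift_diff_basis // -scalerBl ad_x_A ?aa_basis_A //.
suff -> : (if (i.+1 < m)%N then i.+1%:R else 0) - i%:R = 1 :> F by rewrite scale1r.
have [_ | ge_im] := ltnP i.+1 m; first by rewrite mulrS addrK.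
have {ge_im lt_im} m_def : m = i.+1 by apply/eqP; rewrite eqn_leq ge_im.
by apply/eqP; rewrite sub0r eq_sym -addr_eq0 -mulrS -m_def m_eq0.
Qed.

Lemma diff_shift_comm l : aa_diff (aa_shift l) - aa_shift (aa_diff l) = brL x l.
Proof.
have comm_linear : linear (fun l => aa_diff (aa_shift l) - aa_shift (aa_diff l)).
  by move=> a u v; rewrite /aa_diff /aa_shift !linearP /= scalerN scalerBr addrACA.
apply: (linear_basis_ext aa_basisP comm_linear (lie_linearr brL_lie x)).
exact: diff_shift_comm_basis.
Qed.

Lemma almost_abelian_double_ext :
  exists (H : vectType F) (brH : H -> H -> H), lie_algebra brH /\ derived_iso brH brL.
Proof.
have aa_diff_x : aa_diff x = 0 by exact: extend_basis_x.
have aa_shift_x : aa_shift x = 0 by exact: extend_basis_x.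
pose brH := dext_br brL x aa_diff aa_shift.
exists (dext L), brH; split.
  exact: (dext_lie brL_lie (extend_basis_linear _ _) (extend_basis_linear _ _)
    aa_diff_derivation aa_shift_derivation aa_diff_x aa_shift_x diff_shift_comm).
exists (@dext_inl F L); split=> [||X|u v]; first exact: dext_inl_linear.
- exact: dext_inl_inj.
- split=> [/in_derived_dext -> | [l ->]]; first by exists X.1.
  have [c [a [aA ->]]] := almost_abelian_decomp l.
  exists [:: (c, (0, ((1 : F^o), (0 : F^o))), (0, ((0 : F^o), (1 : F^o))));
             (1, dext_inl x, dext_inl a)].
  rewrite big_cons big_seq1 /= scale1r /brH dext_br_inl ad_x_A //.
  rewrite (dext_br_generators brL_lie x (extend_basis_linear _ _) (extend_basis_linear _ _)).
  exact: dext_inl_linear.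
- by rewrite /brH dext_br_inl.
Qed.

End CharDividesDim.

Lemma derived_iso_dim_char (H : vectType F) (brH : H -> H -> H) :
  lie_algebra brH -> derived_iso brH brL -> m%:R = 0 :> F.
Proof.
move=> brH_lie [f [f_linear f_inj f_derived f_bracket]]; rewrite -trace_ad_x.
exact: (trace_ad_derived brH_lie f_linear f_inj f_derived f_bracket aa_basisP x).
Qed.

End AlmostAbelian.

Theorem corollary2p3 (F : fieldType) (L : vectType F) (brL : L -> L -> L) (n : nat) :
  lie_algebra brL -> almost_abelian brL -> \dim (fullv : {vspace L}) = n ->
  ((exists (H : vectType F) (brH : H -> H -> H),
      lie_algebra brH /\ derived_iso brH brL)
   <-> char_divides F (n - 1)%N).
Proof.
move=> brL_lie [x [A [x_notin_A x_A_full A_abelian _ ad_x_A]]] dim_n.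
have -> : (n - 1)%N = \dim A by rewrite -dim_n (dim_almost_abelian x_notin_A x_A_full) subn1.
rewrite char_dividesP; split=> [[H [brH [brH_lie iso]]] | dimA_eq0].
  exact: (derived_iso_dim_char brL_lie x_notin_A x_A_full ad_x_A brH_lie iso).
exact: (almost_abelian_double_ext brL_lie x_notin_A x_A_full A_abelian ad_x_A dimA_eq0).
Qed.
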